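(* Let $G$ be an $(n,d,\lambda)$-graph, $G'\subseteq G$ a subgraph, and $10\lambda\le\delta\le d$. Suppose $A,B\subseteq V(G)$ satisfy $|A|\le \delta n/(100d)$ and every $v\in A$ has $|N_{G'}(v)\cap B|\ge\delta$. Then $$|N_{G'}(A)\cap B|\ \ge\ \min\left(\frac{\delta^2|A|}{8\lambda^2},\ \frac{\delta n}{10d}\right)\ \ge\ 10|A|.$$
   Context: An $(n,d,\lambda)$-graph is an $n$-vertex $d$-regular graph whose second largest eigenvalue in absolute value is at most $\lambda$. For a vertex $v$, $N_{G'}(v)$ is its neighbourhood in $G'$; for a set $A$, $N_{G'}(A)=\left(\bigcup_{a\in A}N_{G'}(a)\right)\setminus A$ is the external neighbourhood. *)

From HB Require Import structures.
From mathcomp Require Import all_boot all_order all_algebra.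
Set Implicit Arguments. Unset Strict Implicit. Unset Printing Implicit Defensive.
Import Order.TTheory GRing.Theory Num.Theory.
Local Open Scope ring_scope.

Definition simple_graph (n : nat) (e : rel 'I_n) : Prop :=
  symmetric e /\ irreflexive e.

Definition nbhd (n : nat) (e : rel 'I_n) (v : 'I_n) : {set 'I_n} :=
  [set u | e v u].

Definition ext_nbhd (n : nat) (e : rel 'I_n) (A : {set 'I_n}) : {set 'I_n} :=
  (\bigcup_(a in A) nbhd e a) :\: A.

Definition regular (n : nat) (e : rel 'I_n) (d : nat) : Prop :=
  forall v : 'I_n, #|nbhd e v| = d.

Definition adj_mx (R : nzRingType) (n : nat) (e : rel 'I_n) : 'M[R]_n :=
  \matrix_(i, j) (e i j)%:R.

(* (n,d,lambda)-graph: n-vertex d-regular simple graph such that, listing the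
   eigenvalues of its adjacency matrix with multiplicity (as roots of the
   characteristic polynomial) and removing one copy of the trivial eigenvalue d,
   all remaining eigenvalues have absolute value at most lambda; i.e. the second
   largest eigenvalue in absolute value is at most lambda. *)
Definition ndl_graph (R : realFieldType) (n d : nat) (lam : R) (e : rel 'I_n)
  : Prop :=
  simple_graph e /\ regular e d /\
  exists s : seq R,
    char_poly (adj_mx R e) = \prod_(x <- d%:R :: s) ('X - x%:P) /\
    all (fun x => `|x| <= lam) s.

(* e' is a subgraph of e (on the same vertex set; isolated vertices irrelevant). *)
Definition subgraph (n : nat) (e' e : rel 'I_n) : Prop :=
  symmetric e' /\ forall u v, e' u v -> e u v.

(* Apply the expander mixing lemma to A and Z := (N_G'(A) :&: B) :|: A.  Each
   v in A has at least delta G-neighbours in Z, so e_G(A, Z) >= delta |A|,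
   whereas mixing gives (e_G(A, Z) - (d/n)|A||Z|)^2 <= lam^2 |A||Z|.  If |Z|
   were below delta n / (10 d), the main term would be at most 0.11 delta |A|,
   and then |Z| >= 0.79 delta^2 |A| / lam^2.
   Mixing is |v M'|^2 <= lam^2 |v|^2 for the centred matrix M' = M - (d/n) J.
   The all-ones row vector is a left eigenvector of M and of M' (eigenvalues d
   and 0) and M, M' differ by a constant matrix, so deflating it shows
   char M' = X * prod (X - s_i).  A symmetric matrix annihilated by
   prod (X - a_i) with all a_i^2 <= L satisfies |v S|^2 <= L |v|^2: split v
   orthogonally into an a_1-eigenvector and a vector killed by the rest. *)

From HB Require Import structures.
From mathcomp Require Import all_boot all_order all_algebra.
From mathcomp Require Import ring lra.
Set Implicit Arguments.
Unset Strict Implicit.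
Unset Printing Implicit Defensive.
Import Order.TTheory GRing.Theory Num.Theory.
Local Open Scope ring_scope.

Section RowDot.
Variable R : realFieldType.

Definition vdot k (u w : 'rV[R]_k) : R := \sum_j u 0 j * w 0 j.

Lemma vdotE k (u w : 'rV[R]_k) : vdot u w = (u *m w^T) 0 0.
Proof. by rewrite mxE; apply: eq_bigr => j _; rewrite mxE. Qed.

Lemma vdotC k (u w : 'rV[R]_k) : vdot u w = vdot w u.
Proof. by apply: eq_bigr => j _; rewrite mulrC. Qed.

Lemma vdotDl k (u v w : 'rV[R]_k) : vdot (u + v) w = vdot u w + vdot v w.
Proof. by rewrite !vdotE mulmxDl mxE. Qed.

Lemma vdotZl k a (u w : 'rV[R]_k) : vdot (a *: u) w = a * vdot u w.
Proof. by rewrite !vdotE -scalemxAl mxE. Qed.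

Lemma vdotBl k (u v w : 'rV[R]_k) : vdot (u - v) w = vdot u w - vdot v w.
Proof. by rewrite -scaleN1r vdotDl vdotZl mulN1r. Qed.

Lemma vdotDr k (u v w : 'rV[R]_k) : vdot w (u + v) = vdot w u + vdot w v.
Proof. by rewrite !(vdotC w) vdotDl. Qed.

Lemma vdotZr k a (u w : 'rV[R]_k) : vdot w (a *: u) = a * vdot w u.
Proof. by rewrite !(vdotC w) vdotZl. Qed.

Lemma vdot0r k (u : 'rV[R]_k) : vdot u 0 = 0.
Proof. by rewrite -(scale0r 0) vdotZr mul0r. Qed.

Lemma vdot_ge0 k (u : 'rV[R]_k) : 0 <= vdot u u.
Proof. by apply: sumr_ge0 => j _; rewrite -expr2 sqr_ge0. Qed.

Lemma vdot_eq0 k (u : 'rV[R]_k) : (vdot u u == 0) = (u == 0).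
Proof.
apply/idP/eqP => [/eqP u0 | ->]; last by rewrite vdot0r.
apply/rowP => j; rewrite mxE; apply/eqP; rewrite -sqrf_eq0 expr2; apply/eqP.
by apply: (psumr_eq0P (fun i _ => sqr_ge0 (u 0 i)) u0).
Qed.

Lemma vdot_mulmxl k (u w : 'rV[R]_k) (S : 'M[R]_k) :
  vdot (u *m S) w = vdot u (w *m S^T).
Proof. by rewrite !vdotE trmx_mul trmxK mulmxA. Qed.

Lemma vdotDd k (u w : 'rV[R]_k) :
  vdot u w = 0 -> vdot (u + w) (u + w) = vdot u u + vdot w w.
Proof. by move=> uw0; rewrite vdotDl !vdotDr (vdotC w) uw0 addr0 add0r. Qed.

Lemma vdot_CauchySchwarz k (u w : 'rV[R]_k) :
  vdot u w ^+ 2 <= vdot u u * vdot w w.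
Proof.
have [/eqP|w_neq0] := eqVneq (vdot w w) 0.
  by rewrite vdot_eq0 => /eqP->; rewrite !vdot0r expr0n mulr0.
have w_gt0 : 0 < vdot w w by rewrite lt_def w_neq0 vdot_ge0.
have := vdot_ge0 (vdot w w *: u - vdot u w *: w).
rewrite vdotDl !vdotDr -!scaleNr !(vdotZl, vdotZr) (vdotC w u).
set x := vdot u w; set y := vdot w w; set z := vdot u u => ge0.
have : 0 <= y * (z * y - x ^+ 2) by nra.
by rewrite pmulr_rge0 // subr_ge0.
Qed.

End RowDot.

Section SymmetricAnnihilator.
Variables (R : realFieldType) (m : nat) (S : 'M[R]_m.+1).
Hypothesis S_sym : S^T = S.

Lemma horner_mx_sym p : (horner_mx S p)^T = horner_mx S p.
Proof.
elim/poly_ind: p => [|p c IHp]; first by rewrite rmorph0 trmx0.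
rewrite rmorphD rmorphM /= horner_mx_X horner_mx_C linearD /= tr_scalar_mx.
by rewrite -mulmxE trmx_mul IHp S_sym (comm_mx_horner _ (erefl (S *m S))).
Qed.

Lemma mulmx_horner_mxM (v : 'rV[R]_m.+1) p q :
  v *m horner_mx S p *m horner_mx S q = v *m horner_mx S (p * q).
Proof. by rewrite -mulmxA mulmxE -rmorphM. Qed.

Lemma vdot_horner_mxl (u w : 'rV[R]_m.+1) p :
  vdot (u *m horner_mx S p) w = vdot u (w *m horner_mx S p).
Proof. by rewrite vdot_mulmxl horner_mx_sym. Qed.

(* [T := horner_mx S p] is symmetric, so [|w T|^2 = <w, w T T> = 0]. *)
Lemma horner_mx_sqr_eq0 (w : 'rV[R]_m.+1) p :
  w *m horner_mx S (p * p) = 0 -> w *m horner_mx S p = 0.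
Proof.
move=> wpp0; apply/eqP; rewrite -vdot_eq0 vdot_horner_mxl.
by rewrite mulmx_horner_mxM wpp0 vdot0r.
Qed.

Lemma sym_mx_eigen_split a g (v : 'rV[R]_m.+1) :
    g.[a] != 0 -> v *m horner_mx S (('X - a%:P) * g) = 0 ->
  exists v1 v2, [/\ v = v1 + v2, v1 *m S = a *: v1, v2 *m horner_mx S g = 0,
    vdot v1 v2 = 0 & vdot (v1 *m S) (v2 *m S) = 0].
Proof.
move=> ga_neq0 vXg0; set c := g.[a].
pose v1 := c^-1 *: (v *m horner_mx S g); exists v1, (v - v1).
have v1_ortho w : w *m horner_mx S g = 0 -> vdot v1 w = 0.
  by move=> wg0; rewrite vdotZl vdot_horner_mxl wg0 vdot0r mulr0.
have XaE : horner_mx S ('X - a%:P) = S - a%:M.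
  by rewrite rmorphB /= horner_mx_X horner_mx_C.
have v1S : v1 *m S = a *: v1.
  apply/eqP; rewrite -subr_eq0 -mul_mx_scalar -mulmxBr -XaE.
  by rewrite -scalemxAl mulmx_horner_mxM mulrC vXg0 scaler0.
have v2g0 : (v - v1) *m horner_mx S g = 0.
  have [h Eh] : exists h, c%:P - g = h * ('X - a%:P).
    by apply/factor_theorem; rewrite /root !hornerE subrr.
  suff : c *: ((v - v1) *m horner_mx S g) = 0.
    by move/eqP; rewrite scaler_eq0 (negPf ga_neq0) => /eqP.
  rewrite scalemxAl scalerBr.
  rewrite /v1 scalerA mulfV // scale1r -mul_mx_scalar -mulmxBr -(horner_mx_C S).
  rewrite -rmorphB Eh mulmx_horner_mxM -mulrA mulrC -mulmx_horner_mxM.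
  by rewrite vXg0 mul0mx.
split=> //; [by rewrite addrC subrK | exact: v1_ortho |].
rewrite v1S vdotZl v1_ortho ?mulr0 //.
by rewrite -mulmxA -(comm_horner_mx _ (erefl (S *m S))) mulmxA v2g0 mul0mx.
Qed.

Lemma sym_mx_annihilator_bound (L : R) (r : seq R) (v : 'rV[R]_m.+1) :
    (forall a, a \in r -> a ^+ 2 <= L) ->
    v *m horner_mx S (\prod_(a <- r) ('X - a%:P)) = 0 ->
  vdot (v *m S) (v *m S) <= L * vdot v v.
Proof.
elim: r v => [|a r IHr] v rL.
  by rewrite big_nil rmorph1 mulmx1 => ->; rewrite mul0mx !vdot0r mulr0.
have {}IHr w := IHr w (fun b br => rL b (mem_behead (s := a :: r) br)).
rewrite big_cons; set g := \prod_(b <- r) _ => vXg0.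
have [ar | a_notin_r] := boolP (a \in r).
  move: vXg0; rewrite /g (big_rem a ar) /= mulrA => vXXh0.
  apply: IHr; rewrite (big_rem a ar) /=.
  set h := \prod_(b <- rem a r) _ in vXXh0 *.
  have := @horner_mx_sqr_eq0 (v *m horner_mx S h) ('X - a%:P).
  by rewrite !mulmx_horner_mxM !(mulrC h) => ->.
have ga_neq0 : g.[a] != 0.
  rewrite horner_prod prodf_seq_neq0; apply/allP => b br /=.
  by rewrite hornerXsubC subr_eq0; apply: contraNneq a_notin_r => ->.
have [v1 [v2 [-> v1S v2g0 v12 v12S]]] := sym_mx_eigen_split ga_neq0 vXg0.
rewrite mulmxDl !vdotDd // v1S vdotZl vdotZr mulrA mulrDr -expr2.
by rewrite lerD ?ler_wpM2r ?vdot_ge0 ?rL ?mem_head ?IHr.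
Qed.

Lemma sym_mx_spectral_bound (L : R) (r : seq R) (v : 'rV[R]_m.+1) :
    char_poly S = \prod_(a <- r) ('X - a%:P) ->
    (forall a, a \in r -> a ^+ 2 <= L) ->
  vdot (v *m S) (v *m S) <= L * vdot v v.
Proof.
move=> chS rL; apply: sym_mx_annihilator_bound rL _.
by rewrite -chS Cayley_Hamilton mulmx0.
Qed.

End SymmetricAnnihilator.

Lemma char_poly_similar (F : fieldType) n (P N D : 'M[F]_n) :
  P \in unitmx -> P *m N = D *m P -> char_poly N = char_poly D.
Proof.
move=> P_unit PN_DP; pose Pp := map_mx polyC P.
have : Pp *m char_poly_mx N = char_poly_mx D *m Pp.
  by rewrite mulmxBr mulmxBl scalar_mxC -!map_mxM PN_DP.
move/(congr1 determinant); rewrite !det_mulmx [_ * \det Pp]mulrC.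
apply: mulfI; rewrite det_map_mx polyC_eq0 -unitfE -unitmxE.
exact: P_unit.
Qed.

Section Deflation.
Variables (F : fieldType) (m : nat).
Local Notation o := (@ord0 m).

Definition deflate (N : 'M[F]_m.+1) : 'M[F]_m :=
  \matrix_(i, j) (N (lift o i) (lift o j) - N (lift o i) o).

Lemma deflateB_const (N : 'M[F]_m.+1) a : deflate (N - const_mx a) = deflate N.
Proof. by apply/matrixP => i j; rewrite !mxE opprB addrA subrK. Qed.

Lemma lift0_neq0 (j : 'I_m) : (lift o j == o) = false.
Proof. by rewrite eq_sym (negbTE (neq_lift _ _)). Qed.

(* Replacing the first row by the sum of all rows conjugates [N] into a
   block-lower-triangular matrix with top-left entry the common column sum. *)
Lemma char_poly_deflate (N : 'M[F]_m.+1) c :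
    (forall j, \sum_i N i j = c) ->
  char_poly N = ('X - c%:P) * char_poly (deflate N).
Proof.
move=> col_sum.
pose P : 'M[F]_m.+1 := \matrix_(i, j) ((i == o) || (i == j))%:R.
pose D : 'M[F]_m.+1 := \matrix_(i, j)
  if i == o then (j == o)%:R * c else N i j - (j != o)%:R * N i o.
have P_unit : P \in unitmx.
  rewrite unitmxE -det_tr det_trig; last first.
    apply/is_trig_mxP => i j ltij; rewrite !mxE -!(inj_eq val_inj) /=.
    by rewrite (gtn_eqF ltij) (gtn_eqF (leq_ltn_trans (leq0n i) ltij)).
  by rewrite big1 ?unitr1 // => i _; rewrite !mxE eqxx orbT.
have PN_DP : P *m N = D *m P.
  apply/matrixP => i k; rewrite !mxE [RHS]big_ord_recl !mxE eqxx /= mulr1.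
  under [X in _ = _ + X]eq_bigr do rewrite !mxE lift0_neq0 /=.
  have [-> | i_neq0] := eqVneq i o.
    under eq_bigr do rewrite !mxE eqxx mul1r.
    by rewrite col_sum mul1r big1 ?addr0 // => j _; rewrite !mul0r.
  under eq_bigr do rewrite !mxE (negPf i_neq0) /= mulr_natl mulrb.
  rewrite -big_mkcond (big_pred1 i) => [|j]; last exact: eq_sym.
  rewrite mul0r subr0; under eq_bigr do rewrite mul1r.
  have [k' -> | ->] := unliftP o k; last first.
    by rewrite big1 ?addr0 // => j _; rewrite lift0_neq0 mulr0.
  rewrite (bigD1 k') //= eqxx mulr1 big1 ?addr0; last first.
    by move=> j /negPf j_neq; rewrite (inj_eq lift_inj) j_neq mulr0.
  by rewrite addrC subrK.
rewrite (char_poly_similar P_unit PN_DP) /char_poly (expand_det_row _ o).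
rewrite big_ord_recl big1 ?addr0 => [|j _]; last first.
  by rewrite !mxE eq_sym lift0_neq0 eqxx mulr0n mul0r sub0r polyC0 oppr0 mul0r.
rewrite /cofactor !mxE eqxx mulr1n mul1r /= expr0 mul1r.
rewrite row'_col'_char_poly_mx; congr (_ * \det (char_poly_mx _)).
by apply/matrixP => i j; rewrite !mxE !lift0_neq0 /= mul1r.
Qed.

End Deflation.

Section AdjacencyMatrix.
Variables (R : realFieldType) (n : nat) (e : rel 'I_n).

Definition ind (X : {set 'I_n}) : 'rV[R]_n := \row_j (j \in X)%:R.

Lemma sum_ind X : \sum_j ind X 0 j = #|X|%:R.
Proof.
rewrite -sum1_card natr_sum [RHS]big_mkcond /=.
by apply: eq_bigr => j _; rewrite mxE; case: (j \in X).
Qed.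

Lemma vdot_ind X Y : vdot (ind X) (ind Y) = #|X :&: Y|%:R.
Proof.
rewrite -sum_ind; apply: eq_bigr => j _.
by rewrite !mxE inE; case: (j \in X); rewrite ?mul1r ?mul0r.
Qed.

Lemma vdot_ind_const X Y a :
  vdot (ind X *m const_mx a) (ind Y) = a * #|X|%:R * #|Y|%:R.
Proof.
rewrite /vdot -[#|Y|%:R]sum_ind mulr_sumr; apply: eq_bigr => j _.
rewrite [in LHS]mxE; congr (_ * _); rewrite -sum_ind mulr_sumr.
by apply: eq_bigr => i _; rewrite !mxE mulrC.
Qed.

Lemma vdot_ind_adj X Y :
  vdot (ind X *m adj_mx R e) (ind Y) = \sum_(x in X) #|nbhd e x :&: Y|%:R.
Proof.
rewrite /vdot; under eq_bigr do rewrite !mxE big_distrl /=.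
rewrite exchange_big [RHS]big_mkcond /=; apply: eq_bigr => i _.
rewrite mxE; case: (i \in X); last by rewrite big1 // => j _; rewrite !mul0r.
by rewrite -vdot_ind; apply: eq_bigr => j _; rewrite !mxE !inE mul1r.
Qed.

Lemma adj_mx_sym : symmetric e -> (adj_mx R e)^T = adj_mx R e.
Proof. by move=> e_sym; apply/matrixP => i j; rewrite !mxE e_sym. Qed.

Lemma adj_mx_col_sum d j :
  symmetric e -> regular e d -> \sum_i adj_mx R e i j = d%:R.
Proof.
move=> e_sym e_reg; rewrite -(e_reg j) -sum1_card natr_sum [RHS]big_mkcond /=.
by apply: eq_bigr => i _; rewrite mxE inE e_sym; case: (e j i).
Qed.

Definition centered_adj d : 'M[R]_n := adj_mx R e - const_mx (d%:R / n%:R).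

Lemma centered_adjE d i j : centered_adj d i j = adj_mx R e i j - d%:R / n%:R.
Proof. by rewrite !mxE. Qed.

End AdjacencyMatrix.

Lemma char_poly_centered_adj (R : realFieldType) m (e : rel 'I_m.+1) d s :
    symmetric e -> regular e d ->
    char_poly (adj_mx R e) = \prod_(x <- d%:R :: s) ('X - x%:P) ->
  char_poly (centered_adj R e d) = \prod_(x <- 0 :: s) ('X - x%:P).
Proof.
move=> e_sym e_reg; set M := adj_mx R e.
have col_sumM j : \sum_i M i j = d%:R := adj_mx_col_sum R j e_sym e_reg.
have col_sum0 j : \sum_i centered_adj R e d i j = 0.
  under eq_bigr do rewrite centered_adjE.
  rewrite sumrB col_sumM sumr_const card_ord -(mulr_natr (d%:R / _)).
  by rewrite divfK ?subrr ?pnatr_eq0.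
rewrite (char_poly_deflate col_sumM) (char_poly_deflate col_sum0).
rewrite deflateB_const !big_cons.
by move/(mulfI (negbT (polyXsubC_eq0 _))) ->.
Qed.

Lemma centered_adj_bound (R : realFieldType) m d (lam : R) (e : rel 'I_m.+1)
    (v : 'rV[R]_m.+1) :
    ndl_graph d lam e ->
  vdot (v *m centered_adj R e d) (v *m centered_adj R e d)
    <= lam ^+ 2 * vdot v v.
Proof.
move=> [[e_sym _] [e_reg [s [chM s_lam]]]].
apply: sym_mx_spectral_bound (char_poly_centered_adj e_sym e_reg chM) _.
  by rewrite linearB /= trmx_const adj_mx_sym.
move=> x; rewrite inE => /predU1P[-> | xs]; first by rewrite expr0n sqr_ge0.
by move/allP/(_ x xs): s_lam; rewrite ler_norml => /andP[]; nra.
Qed.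

Lemma expander_mixing (R : realFieldType) n d (lam : R) (e : rel 'I_n)
    (X Y : {set 'I_n}) :
  ndl_graph d lam e ->
  (\sum_(x in X) #|nbhd e x :&: Y|%:R - d%:R / n%:R * #|X|%:R * #|Y|%:R) ^+ 2
    <= lam ^+ 2 * #|X|%:R * #|Y|%:R.
Proof.
case: n e X Y => [|m] e X Y G.
  have -> : X = set0 by apply/setP => -[].
  by rewrite big_set0 cards0 !(mulr0, mul0r) subr0 expr0n.
rewrite -vdot_ind_adj -[_ * _ * _ in X in X ^+ 2]vdot_ind_const -vdotBl.
rewrite -mulmxBr -/(centered_adj _ _ _).
apply: le_trans (vdot_CauchySchwarz _ _) _.
rewrite [vdot (ind _ Y) _]vdot_ind setIid.
apply: ler_wpM2r; first exact: ler0n.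
by have := centered_adj_bound (ind R X) G; rewrite vdot_ind setIid.
Qed.

Lemma ndl_graph_lam_gt0 (R : realFieldType) n d (lam : R) (e : rel 'I_n) :
  ndl_graph d lam e -> (0 < d)%N -> 0 < lam.
Proof.
move=> G d_gt0; have [[_ e_irr] [e_reg [s [chM s_lam]]]] := G.
have n_eq : n = (size s).+1.
  by have := size_char_poly (adj_mx R e); rewrite chM size_prod_XsubC => -[].
have v : 'I_n by rewrite n_eq; exact: ord0.
have d_le : (d <= n.-1)%N.
  rewrite -(e_reg v) -[n in n.-1]card_ord -(cardsC1 v) subset_leq_card //.
  by apply/subsetP => u; rewrite !inE; apply: contraTneq => ->; rewrite e_irr.
have lam_ge0 : 0 <= lam.
  move: s_lam d_le; rewrite n_eq; case: (s) => [|x s'] /=.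
    by rewrite leqn0 => _ /eqP d0; rewrite d0 in d_gt0.
  by case/andP => /(le_trans (normr_ge0 x)).
have := expander_mixing [set v] [set v] G; rewrite big_set1 cards1.
have -> : nbhd e v :&: [set v] = set0.
  by apply/setP => u; rewrite !inE andbC; case: eqP => [->|//]; rewrite e_irr.
rewrite cards0 !mulr1 sub0r sqrrN lt_def lam_ge0 andbT.
apply: contraTneq => ->; rewrite expr0n /= -ltNge exprn_gt0 //.
by rewrite divr_gt0 ?ltr0n // n_eq.
Qed.

Lemma subgraph_nbhd_sum_ge (R : realFieldType) n (e e' : rel 'I_n)
    (A B : {set 'I_n}) (delta : R) :
    subgraph e' e -> (forall v, v \in A -> delta <= #|nbhd e' v :&: B|%:R) ->
  delta * #|A|%:R
    <= \sum_(v in A) #|nbhd e v :&: (ext_nbhd e' A :&: B :|: A)|%:R.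
Proof.
move=> [_ e'_sub] deg_B; rewrite mulr_natr -sumr_const; apply: ler_sum => v vA.
apply: le_trans (deg_B v vA) _; rewrite ler_nat subset_leq_card //.
apply/subsetP => u; rewrite !inE => /andP[vu uB]; rewrite e'_sub //=.
have [//|_] := boolP (u \in A); rewrite uB andbT orbF /=.
by apply/bigcupP; exists v; rewrite ?inE.
Qed.

Lemma expansion_arith (R : realFieldType) (a y z lam delta k s : R) :
    0 < a -> 0 < lam -> 10 * lam <= delta -> 0 < k -> 0 <= y ->
    a <= delta / (100 * k) -> delta * a <= s ->
    (s - k * a * z) ^+ 2 <= lam ^+ 2 * a * z -> z <= y + a ->
  Num.min (delta ^+ 2 * a / (8 * lam ^+ 2)) (delta / (10 * k)) <= y
  /\ 10 * a <= Num.min (delta ^+ 2 * a / (8 * lam ^+ 2)) (delta / (10 * k)).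
Proof.
move=> a_gt0 lam_gt0 lam_delta k_gt0 y_ge0 a_le s_ge mixing z_le.
have lam8_gt0 : 0 < 8 * lam ^+ 2 by rewrite pmulr_rgt0 // exprn_gt0.
have k10_gt0 : 0 < 10 * k by rewrite pmulr_rgt0.
rewrite ler_pdivlMr ?pmulr_rgt0 // in a_le.
have delta_sqr : 100 * lam ^+ 2 <= delta ^+ 2 by nra.
split; last first.
  rewrite le_min !ler_pdivlMr //; apply/andP; split.
    by clear -a_gt0 delta_sqr; nra.
  by clear -a_le; nra.
rewrite ge_min; have [_|y_lt] := lerP (delta / (10 * k)) y.
  by rewrite orbT.
(* Now k z < 0.11 delta, so mixing gives (0.89 delta a)^2 <= lam^2 a z. *)
rewrite ltr_pdivlMr // in y_lt; rewrite ler_pdivrMr //; apply/orP; left.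
have kz_lt : k * z < delta * (11 / 100).
  by have := ler_wpM2l (ltW k_gt0) z_le; lra.
have gap : delta * a * (89 / 100) <= s - k * a * z.
  by move: kz_lt; rewrite -(ltr_pM2r a_gt0); lra.
have gap_sqr : (delta * a * (89 / 100)) ^+ 2 <= lam ^+ 2 * a * z.
  apply: le_trans mixing; rewrite ler_sqr ?nnegrE //; nra.
have z_ge : delta ^+ 2 * a * (7921 / 10000) <= lam ^+ 2 * z.
  by rewrite -(ler_pM2r a_gt0); nra.
have lam_z := ler_wpM2l (sqr_ge0 lam) z_le.
have delta_a := ler_wpM2r (ltW a_gt0) delta_sqr.
have lam_a := mulr_ge0 (sqr_ge0 lam) (ltW a_gt0).
by clear -z_ge lam_z delta_a lam_a; lra.
Qed.

Theorem lemma3p9 (R : realFieldType) (n d : nat) (lam delta : R)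
  (e e' : rel 'I_n) (A B : {set 'I_n}) :
  @ndl_graph R n d lam e ->
  subgraph e' e ->
  10 * lam <= delta -> delta <= d%:R ->
  #|A|%:R <= delta * n%:R / (100 * d%:R) ->
  (forall v, v \in A -> delta <= #|nbhd e' v :&: B|%:R) ->
  Num.min (delta ^+ 2 * #|A|%:R / (8 * lam ^+ 2)) (delta * n%:R / (10 * d%:R))
    <= #|ext_nbhd e' A :&: B|%:R
  /\ 10 * #|A|%:R
    <= Num.min (delta ^+ 2 * #|A|%:R / (8 * lam ^+ 2)) (delta * n%:R / (10 * d%:R)).
Proof.
move=> G e'_sub lam_delta _ A_le deg_B.
have [A0 | A_gt0] := posnP #|A|.
  have tenfold :
      delta * n%:R / (10 * d%:R) = 10 * (delta * n%:R / (100 * d%:R)).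
    by rewrite !invfM [10^-1](_ : _ = 10 * 100^-1 :> R); [ring | field].
  move: A_le; rewrite A0 !(mulr0, mul0r) tenfold => A_le.
  by rewrite ge_min le_min ler0n lexx mulr_ge0.
have d_gt0 : (0 < d)%N.
  rewrite lt0n; apply: contraTneq A_le => ->.
  by rewrite mulr0 invr0 mulr0 -ltNge ltr0n.
have n_gt0 : (0 < n)%N by rewrite -[n]card_ord (leq_trans A_gt0) ?max_card.
pose k : R := d%:R / n%:R.
have k_gt0 : 0 < k by rewrite divr_gt0 ?ltr0n.
have ratio c : c != 0 -> delta * n%:R / (c * d%:R) = delta / (c * k).
  move=> c_neq0; rewrite /k; field.
  by rewrite c_neq0 !pnatr_eq0 -!lt0n d_gt0 n_gt0.
rewrite ratio ?pnatr_eq0 // in A_le; rewrite ratio ?pnatr_eq0 //.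
set Y := ext_nbhd e' A :&: B.
have union : #|Y :|: A|%:R <= #|Y|%:R + #|A|%:R :> R.
  by rewrite -natrD ler_nat leq_card_setU.
have a_gt0 : 0 < #|A|%:R :> R by rewrite ltr0n.
exact: expansion_arith a_gt0 (ndl_graph_lam_gt0 G d_gt0) lam_delta k_gt0
  (ler0n _ _) A_le (subgraph_nbhd_sum_ge e'_sub deg_B)
  (expander_mixing A _ G) union.
Qed.
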